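(* Assume $\rho_\alpha^{\mathrm{dir}}<1$, and let $\theta^\star$ be the unique projected Bellman fixed point. Fix $\varepsilon>0$ with $\beta_\varepsilon:=\rho_\alpha^{\mathrm{dir}}+\varepsilon<1$, and let $p_\varepsilon$ and $C_\varepsilon$ be as described in the context. Assume additionally that \[ \lambda_\varepsilon:=\beta_\varepsilon+4\alpha\sqrt{C_\varepsilon}(1+\gamma)\phi_{\max}^2<1. \] Let \[ K:=2\alpha\sqrt{C_\varepsilon}\,\phi_{\max}\Big(R_{\max}+(1+\gamma)\|\Phi\theta^\star\|_\infty+\|R+\gamma PV_{\theta^\star}-\Phi\theta^\star\|_\infty\Big). \] Then for all $k\ge0$, with $x_k:=\theta_k-\theta^\star$, we have \[ \mathbb E[p_\varepsilon(x_k)]\le\lambda_\varepsilon^kp_\varepsilon(x_0)+\frac{K}{1-\lambda_\varepsilon}(1-\lambda_\varepsilon^k), \] \[ \mathbb E[\|\theta_k-\theta^\star\|_2]\le\sqrt{C_\varepsilon}\lambda_\varepsilon^k\|\theta_0-\theta^\star\|_2+\frac{K}{1-\lambda_\varepsilon}, \] \[ \limsup_{k\to\infty}\mathbb E[\|\theta_k-\theta^\star\|_2]\le\frac{K}{1-\lambda_\varepsilon}, \] \[ \mathbb E[\|\Phi\theta_k-\Phi\theta^\star\|_2]\le\|\Phi\|_2\Big(\sqrt{C_\varepsilon}\lambda_\varepsilon^k\|\theta_0-\theta^\star\|_2+\frac{K}{1-\lambda_\varepsilon}\Big). \]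
   Context: Consider a finite discounted MDP with state space $\mathcal S=\{1,\dots,|\mathcal S|\}$, action space $\mathcal A=\{1,\dots,|\mathcal A|\}$, transition probabilities $P(s'\mid s,a)$, real rewards $r(s,a,s')$, expected reward $R(s,a)=\sum_{s'}P(s'\mid s,a)r(s,a,s')$, and discount factor $\gamma\in(0,1)$. Let $R_{\max}:=\max_{s,a,s'}|r(s,a,s')|$. State-action vectors are ordered as $(1,1),(2,1),\dots,(|\mathcal S|,1),(1,2),\dots$. The matrix $P\in\mathbb R^{|\mathcal S||\mathcal A|\times|\mathcal S|}$ has rows $P(\cdot\mid s,a)$, and $R$ has entries $R(s,a)$. The set $\Theta$ is the set of deterministic stationary policies $\pi:\mathcal S\to\mathcal A$. For $\pi\in\Theta$, $\Pi^\pi\in\mathbb R^{|\mathcal S|\times|\mathcal S||\mathcal A|}$ has entry $1$ at row $s$, column $(s,\pi(s))$, and zeros elsewhere. The feature matrix $\Phi\in\mathbb R^{|\mathcal S||\mathcal A|\times m}$ has full column rank and rows $\phi(s,a)^\top$. Let $\phi_{\max}:=\max_{s,a}\|\phi(s,a)\|_2$, and define $V_\theta(s):=\max_a\phi(s,a)^\top\theta$. Markovian observations: fix a behavior policy $b(a\mid s)$. The trajectory evolves as $s_{k+1}\sim P(\cdot\mid s_k,a_k)$, $r_{k+1}=r(s_k,a_k,s_{k+1})$, $a_{k+1}\sim b(\cdot\mid s_{k+1})$. The state-action chain $X_k=(s_k,a_k)$ has transition kernel $P(s'\mid s,a)b(a'\mid s')$ and is assumed to have a stationary distribution $d$ with $d(s,a)>0$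 for all pairs. The chain need not start in stationarity. Let $D=\mathrm{diag}(d)$. The step size is $\alpha\in(0,1)$, and $\theta_0$ is deterministic. The update is \[ \theta_{k+1}=\theta_k+\alpha\phi(s_k,a_k)\Big(r_{k+1}+\gamma\max_u\phi(s_{k+1},u)^\top\theta_k-\phi(s_k,a_k)^\top\theta_k\Big). \] Define $g(\theta):=\Phi^\top D(R+\gamma PV_\theta-\Phi\theta)$. A projected Bellman fixed point is a $\theta^\star$ with $g(\theta^\star)=0$. For $\pi\in\Theta$, define $A_\pi:=I-\alpha\Phi^\top D\Phi+\alpha\gamma\Phi^\top DP\Pi^\pi\Phi$. Let $\rho_\alpha^{\mathrm{dir}}:=\lim_k\max_{\pi_1,\dots,\pi_k}\|A_{\pi_k}\cdots A_{\pi_1}\|^{1/k}$ be the joint spectral radius of $\{A_\pi:\pi\in\Theta\}$. If $\rho_\alpha^{\mathrm{dir}}<1$, a projected Bellman fixed point exists and is unique. Lyapunov norm: define \[ V_\varepsilon^\infty(x):=\lim_{t\to\infty}\sum_{\ell=0}^t\beta_\varepsilon^{-2\ell}\max_{\pi_1,\dots,\pi_\ell\in\Theta}\|A_{\pi_\ell}\cdots A_{\pi_1}x\|_2^2, \] where the $\ell=0$ term is $\|x\|_2^2$, and $p_\varepsilon:=\sqrt{V_\varepsilon^\infty}$ (a norm). Let $C_\varepsilon\ge1$ be a constant with $\|x\|_2^2\le V_\varepsilon^\infty(x)\le C_\varepsilon\|x\|_2^2$ for all $x$ (such a constant exists). *)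

From HB Require Import structures.
From mathcomp Require Import all_boot all_order all_algebra.
From mathcomp Require Import all_classical all_reals all_analysis.
Set Implicit Arguments. Unset Strict Implicit. Unset Printing Implicit Defensive.
Import Order.TTheory GRing.Theory Num.Theory.
Local Open Scope ring_scope.
Local Open Scope classical_set_scope.

Section QLearningDefs.
Variable R : realType.
Variables S A : finType.
Variable m : nat.

Definition nSA := #|{: S * A}|.
Definition nS := #|{: S}|.
Definition sa_of (i : 'I_nSA) : S * A := enum_val i.
Definition s_of (j : 'I_nS) : S := enum_val j.

Definition norm2 n (x : 'cV[R]_n) : R := Num.sqrt (\sum_i x i 0 ^+ 2).
Definition norminf n (x : 'cV[R]_n) : R := \big[Num.max/0]_i `|x i 0|.
Definition opnorm n p (M : 'M[R]_(n, p)) : R :=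
  sup [set norm2 (M *m x) | x in [set x : 'cV[R]_p | norm2 x <= 1]].

Definition dot (u v : 'cV[R]_m) : R := \sum_i u i 0 * v i 0.

Definition maxA (f : A -> R) : R :=
  match [pick a : A] with Some a0 => \big[Num.max/f a0]_a f a | None => 0 end.

Variable phi : S -> A -> 'cV[R]_m.

Definition Vth (th : 'cV[R]_m) (s : S) : R := maxA (fun a => dot (phi s a) th).

Definition Phi : 'M[R]_(nSA, m) :=
  \matrix_(i, j) phi (sa_of i).1 (sa_of i).2 j 0.

Variable P : S -> A -> S -> R.         (* P(s' | s, a) = P s a s' *)
Variable r : S -> A -> S -> R.

Definition Rexp (s : S) (a : A) : R := \sum_s' P s a s' * r s a s'.
Definition Rvec : 'cV[R]_nSA := \col_i Rexp (sa_of i).1 (sa_of i).2.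
Definition Pm : 'M[R]_(nSA, nS) := \matrix_(i, j) P (sa_of i).1 (sa_of i).2 (s_of j).
Definition Vvec (th : 'cV[R]_m) : 'cV[R]_nS := \col_j Vth th (s_of j).
Definition Pim (pi : {ffun S -> A}) : 'M[R]_(nS, nSA) :=
  \matrix_(j, i) (sa_of i == (s_of j, pi (s_of j)))%:R.

Variable d : S * A -> R.               (* stationary distribution of the behaviour chain *)
Definition Dm : 'M[R]_nSA := diag_mx (\row_i d (sa_of i)).

Variables (alpha gamma : R).

Definition Bres (th : 'cV[R]_m) : 'cV[R]_nSA := Rvec + gamma *: (Pm *m Vvec th) - Phi *m th.
Definition gfun (th : 'cV[R]_m) : 'cV[R]_m := Phi^T *m Dm *m Bres th.

Definition Amat (pi : {ffun S -> A}) : 'M[R]_m :=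
  1%:M - alpha *: (Phi^T *m Dm *m Phi)
       + (alpha * gamma) *: (Phi^T *m Dm *m Pm *m Pim pi *m Phi).

(* prodA [:: pi_1; ...; pi_k] = A_{pi_k} ... A_{pi_1} *)
Definition prodA (s : seq {ffun S -> A}) : 'M[R]_m :=
  foldr (fun pi M => M *m Amat pi) 1%:M s.

Definition maxprod (k : nat) : R :=
  \big[Num.max/0]_(ps : k.-tuple {ffun S -> A}) opnorm (prodA ps).

Definition jsr : R := limn (fun k => powR (maxprod k) (k%:R)^-1).

Definition Vinf (beta : R) (x : 'cV[R]_m) : R :=
  limn (fun t => \sum_(l < t.+1)
          (beta ^+ (2 * l))^-1 *
          \big[Num.max/0]_(ps : (val l).-tuple {ffun S -> A})
              norm2 (prodA ps *m x) ^+ 2).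

Definition peps (beta : R) (x : 'cV[R]_m) : R := Num.sqrt (Vinf beta x).

Definition Rmax : R := \big[Num.max/0]_(x : S * A * S) `|r x.1.1 x.1.2 x.2|.
Definition phimax : R := \big[Num.max/0]_(x : S * A) norm2 (phi x.1 x.2).

(* Q-learning iterates along a state-action trajectory w : nat -> S * A,
   w k = (s_k, a_k);  r_{k+1} = r(s_k, a_k, s_{k+1}). *)
Fixpoint theta (th0 : 'cV[R]_m) (w : nat -> S * A) (k : nat) : 'cV[R]_m :=
  match k with
  | 0 => th0
  | k'.+1 =>
      let th := theta th0 w k' in
      let s := (w k').1 in let a := (w k').2 in let s' := (w k'.+1).1 in
      th + alpha *: ((r s a s' + gamma * Vth th s' - dot (phi s a) th) *: phi s a)
  end.

Variable b : S -> A -> R.              (* behaviour policy b(a | s) = b s a *)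
Variable mu : S * A -> R.              (* law of X_0 = (s_0, a_0) *)

Definition wnat k (w : {ffun 'I_k.+1 -> S * A}) (j : nat) : S * A := w (inord j).

Definition pathprob k (w : {ffun 'I_k.+1 -> S * A}) : R :=
  mu (wnat w 0) *
  \prod_(j < k) (P (wnat w j).1 (wnat w j).2 (wnat w j.+1).1 *
                 b (wnat w j.+1).1 (wnat w j.+1).2).

Definition Expect (th0 : 'cV[R]_m) (k : nat) (f : 'cV[R]_m -> R) : R :=
  \sum_(w : {ffun 'I_k.+1 -> S * A}) pathprob w * f (theta th0 (wnat w) k).

End QLearningDefs.

(* Write x_k = theta_k - theta_star.  Along every trajectory the update reads
   x_(k+1) = A_pi x_k + noise_k for the policy pi playing the current action,
   and |noise_k| is at most a constant plus a multiple of |x_k|: this only uses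
   |r| <= R_max, |phi| <= phi_max and the stochasticity of P and Pi^pi.  The
   Lyapunov norm p_eps is subadditive, contracted by beta_eps by every A_pi, and
   squeezed between |.|_2 and sqrt C_eps |.|_2.  Hence
   p_eps(x_(k+1)) <= lam p_eps(x_k) + K holds pathwise; unrolling this recursion
   and averaging over trajectories gives all four bounds. *)

From Pilot Require Import Defs.
From HB Require Import structures.
From mathcomp Require Import all_boot all_order all_algebra.
From mathcomp Require Import all_classical all_reals all_analysis.
From mathcomp Require Import ring lra.
Set Implicit Arguments. Unset Strict Implicit. Unset Printing Implicit Defensive.
Import Order.TTheory GRing.Theory Num.Theory.
Local Open Scope ring_scope.

Section Young.
Variable R : rcfType.
Implicit Types a b c t x y : R.

Lemma young_mul a b t : 0 < t -> 2 * (a * b) <= t * a ^+ 2 + t^-1 * b ^+ 2.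
Proof.
move=> t0; rewrite -subr_ge0.
have -> : t * a ^+ 2 + t^-1 * b ^+ 2 - 2 * (a * b) = (t * a - b) ^+ 2 / t.
  by field; rewrite gt_eqF.
by rewrite divr_ge0 ?sqr_ge0 ?ltW.
Qed.

Lemma young_sqrD a b t : 0 < t ->
  (a + b) ^+ 2 <= (1 + t) * a ^+ 2 + (1 + t^-1) * b ^+ 2.
Proof. by move=> /(young_mul a b) h; rewrite sqrrD; lra. Qed.

(* With [t = (y + e) / (x + e)] the hypothesis gives [c <= 2 x y + e (x + y)],
   uniformly in the degenerate cases [x = 0] or [y = 0]. *)
Lemma le_2mul_of_young x y c : 0 <= x -> 0 <= y ->
  (forall t, 0 < t -> c <= t * x ^+ 2 + t^-1 * y ^+ 2) -> c <= 2 * (x * y).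
Proof.
move=> x0 y0 hc; apply/ler_addgt0Pr => e e0.
have s0 : 0 < x + y + 1 by lra.
set f := e / (x + y + 1).
have f0 : 0 < f by rewrite divr_gt0.
have hxf : 0 < x + f by lra.
have hyf : 0 < y + f by lra.
have := hc ((y + f) / (x + f)) (divr_gt0 hyf hxf).
have tx : (y + f) / (x + f) * x ^+ 2 <= (y + f) * x.
  rewrite mulrAC ler_pdivrMr //.
  by have := mulr_ge0 (mulr_ge0 (ltW hyf) x0) (ltW f0); nra.
have ty : ((y + f) / (x + f))^-1 * y ^+ 2 <= (x + f) * y.
  rewrite invf_div mulrAC ler_pdivrMr //.
  by have := mulr_ge0 (mulr_ge0 (ltW hxf) y0) (ltW f0); nra.
have fe : f * (x + y) <= e.
  by rewrite /f mulrAC ler_pdivrMr //; have := ltW e0; nra.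
by lra.
Qed.

Lemma le_sqrD_of_young x y c : 0 <= x -> 0 <= y ->
  (forall t, 0 < t -> c <= (1 + t) * x ^+ 2 + (1 + t^-1) * y ^+ 2) ->
  c <= (x + y) ^+ 2.
Proof.
move=> x0 y0 hc.
suff : c - x ^+ 2 - y ^+ 2 <= 2 * (x * y) by rewrite sqrrD; lra.
by apply: le_2mul_of_young => // t /hc; lra.
Qed.

Lemma le_sqrtD_of_young a b c : 0 <= a -> 0 <= b ->
  (forall t, 0 < t -> c <= (1 + t) * a + (1 + t^-1) * b) ->
  Num.sqrt c <= Num.sqrt a + Num.sqrt b.
Proof.
move=> a0 b0 hc.
rewrite -[leRHS]ger0_norm ?addr_ge0 ?sqrtr_ge0 // -sqrtr_sqr ler_sqrt ?sqr_ge0 //.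
by apply: le_sqrD_of_young; rewrite ?sqrtr_ge0 ?sqr_sqrtr.
Qed.

End Young.

Section Norms.
Variable R : realType.

Lemma norm2_ge0 n (x : 'cV[R]_n) : 0 <= norm2 x.
Proof. exact: sqrtr_ge0. Qed.

Lemma sumsqr_ge0 n (x : 'cV[R]_n) : 0 <= \sum_i x i 0 ^+ 2.
Proof. by apply: sumr_ge0 => i _; apply: sqr_ge0. Qed.

Lemma norm2_sqr n (x : 'cV[R]_n) : norm2 x ^+ 2 = \sum_i x i 0 ^+ 2.
Proof. by rewrite sqr_sqrtr // sumsqr_ge0. Qed.

Lemma norm2Z n c (x : 'cV[R]_n) : norm2 (c *: x) = `|c| * norm2 x.
Proof.
rewrite /norm2 -sqrtr_sqr -sqrtrM ?sqr_ge0 // mulr_sumr.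
by congr Num.sqrt; apply: eq_bigr => i _; rewrite mxE exprMn.
Qed.

Lemma norm2_0 n : norm2 (0 : 'cV[R]_n) = 0.
Proof. by rewrite -(scale0r 0) norm2Z normr0 mul0r. Qed.

Lemma ler_norm2D n (x y : 'cV[R]_n) : norm2 (x + y) <= norm2 x + norm2 y.
Proof.
apply: le_sqrtD_of_young; rewrite ?sumsqr_ge0 // => t t0.
rewrite !mulr_sumr -big_split /=; apply: ler_sum => i _.
by rewrite mxE young_sqrD.
Qed.

Lemma ler_norm2_sum n (I : finType) (F : I -> 'cV[R]_n) :
  norm2 (\sum_i F i) <= \sum_i norm2 (F i).
Proof.
elim/big_rec2: _ => [|i y1 y2 _ IH]; first by rewrite norm2_0.
by apply: le_trans (ler_norm2D _ _) _; rewrite lerD2l.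
Qed.

Lemma ler_abs_norm2 n (x : 'cV[R]_n) i : `|x i 0| <= norm2 x.
Proof.
rewrite -sqrtr_sqr ler_sqrt ?sumsqr_ge0 // (bigD1 i) //= lerDl.
by apply: sumr_ge0 => j _; apply: sqr_ge0.
Qed.

Lemma norm2_eq0 n (x : 'cV[R]_n) : norm2 x = 0 -> x = 0.
Proof.
move=> x0; apply/matrixP => i j; rewrite (ord1 j) mxE.
by apply/eqP; rewrite -normr_le0 -x0 ler_abs_norm2.
Qed.

Lemma ler_abs_dot m (u v : 'cV[R]_m) : `|dot u v| <= norm2 u * norm2 v.
Proof.
suff : 2 * `|dot u v| <= 2 * (norm2 u * norm2 v) by lra.
apply: le_2mul_of_young; rewrite ?norm2_ge0 // => t t0.
rewrite !norm2_sqr !mulr_sumr -big_split /= /dot.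
apply: le_trans (ler_wpM2l _ (ler_norm_sum _ _ _)) _ => //.
rewrite mulr_sumr; apply: ler_sum => i _.
by rewrite normrM -(real_normK (num_real (u i 0))) -(real_normK (num_real (v i 0))) young_mul.
Qed.

Lemma norminf_ge0 n (v : 'cV[R]_n) : 0 <= norminf v.
Proof. exact: bigmax_ge_id. Qed.

Lemma ler_abs_norminf n (v : 'cV[R]_n) i : `|v i 0| <= norminf v.
Proof. exact: (bigmax_sup i). Qed.

Let opnorm_set n p (M : 'M[R]_(n, p)) :=
  [set norm2 (M *m x) | x in [set x : 'cV[R]_p | norm2 x <= 1]]%classic.

Lemma opnorm_set0 n p (M : 'M[R]_(n, p)) : opnorm_set M 0.
Proof. by exists 0; rewrite /= ?mulmx0 norm2_0 ?ler01. Qed.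

Lemma has_sup_opnorm_set n p (M : 'M[R]_(n, p)) : has_sup (opnorm_set M).
Proof.
split; first by exists 0; apply: opnorm_set0.
exists (\sum_j norm2 (col j M)) => _ [x x1 <-].
have -> : M *m x = \sum_j x j 0 *: col j M.
  apply/matrixP => i k; rewrite !mxE summxE; apply: eq_bigr => j _.
  by rewrite !mxE (ord1 k) mulrC.
apply: le_trans (ler_norm2_sum _) _; apply: ler_sum => j _.
rewrite norm2Z ler_piMl ?norm2_ge0 //.
exact: le_trans (ler_abs_norm2 x j) x1.
Qed.

Lemma opnorm_ge0 n p (M : 'M[R]_(n, p)) : 0 <= opnorm M.
Proof. exact: sup_upper_bound (has_sup_opnorm_set M) _ (opnorm_set0 M). Qed.

Lemma ler_opnorm n p (M : 'M[R]_(n, p)) x : norm2 (M *m x) <= opnorm M * norm2 x.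
Proof.
have [x0|x0] := eqVneq (norm2 x) 0.
  by rewrite (norm2_eq0 x0) mulmx0 !norm2_0 mulr0.
have xpos : 0 < norm2 x by rewrite lt_def x0 norm2_ge0.
rewrite -ler_pdivrMr // mulrC -[(norm2 x)^-1]ger0_norm ?invr_ge0 ?norm2_ge0 //.
rewrite -norm2Z scalemxAr.
apply: sup_upper_bound (has_sup_opnorm_set M) _ _; exists ((norm2 x)^-1 *: x) => //.
by rewrite /= norm2Z ger0_norm ?invr_ge0 ?norm2_ge0 // mulVf.
Qed.

End Norms.

Lemma stochastic_mulmx_le (R : numDomainType) n p (M : 'M[R]_(n, p))
    (z : 'cV[R]_p) c : (forall i j, 0 <= M i j) -> (forall i, \sum_j M i j = 1) ->
  (forall j, `|z j 0| <= c) -> forall i, `|(M *m z) i 0| <= c.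
Proof.
move=> M0 M1 hz i; rewrite mxE; apply: le_trans (ler_norm_sum _ _ _) _.
rewrite -[c]mul1r -(M1 i) mulr_suml; apply: ler_sum => j _.
by rewrite normrM (ger0_norm (M0 _ _)) ler_wpM2l.
Qed.

Lemma affine_recursion_le (R : realFieldType) (u : nat -> R) (lam K : R) :
  0 <= lam -> lam != 1 -> (forall k, u k.+1 <= lam * u k + K) ->
  forall k, u k <= lam ^+ k * u 0 + K / (1 - lam) * (1 - lam ^+ k).
Proof.
move=> lam0 lam1 hu; elim=> [|k IH]; first by rewrite expr0 mul1r subrr mulr0 addr0.
apply: le_trans (hu k) _; apply: le_trans (lerD (ler_wpM2l lam0 IH) (lexx K)) _.
by rewrite le_eqVlt exprS; apply/orP; left; apply/eqP; field; rewrite subr_eq0 eq_sym.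
Qed.

Section Sequences.
Variable R : realType.
Local Open Scope classical_set_scope.

Lemma limn_esup_le_geometric (u : nat -> R) (c lam L : R) : 0 <= lam < 1 ->
  (forall k, u k <= c * lam ^+ k + L) -> (limn_esup (fun k => (u k)%:E) <= L%:E)%E.
Proof.
move=> /andP[lam0 lam1] hu.
pose v k := (c * lam ^+ k + L)%:E.
have cv : v @ \oo --> L%:E.
  apply: cvg_EFin; first exact: nearW.
  have lim0 : (fun k => c * lam ^+ k) @ \oo --> 0.
    by rewrite -(mulr0 c); apply: cvgMl_tmp; apply: cvg_expr; rewrite ger0_norm.
  have : (fun k => c * lam ^+ k + L) @ \oo --> 0 + L.
    by apply: cvgD; [exact: lim0 | exact: cvg_cst].
  by rewrite add0r.
rewrite -(cvg_lim _ cv) // -is_cvg_limn_esupE; last by apply/cvg_ex; exists L%:E.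
rewrite !limn_esup_lim; apply: lee_lim; [exact: is_cvg_esups | exact: is_cvg_esups |].
apply: nearW => n; apply: ge_ereal_sup => _ [k /= nk <-].
apply: (@le_trans _ _ (v k)); first by rewrite lee_fin.
by apply: ereal_sup_ubound; exists k.
Qed.

End Sequences.

Section LyapunovNorm.
Variables (R : realType) (S A : finType) (m : nat).
Variables (phi : S -> A -> 'cV[R]_m) (P : S -> A -> S -> R) (d : S * A -> R).
Variables (alpha gamma beta : R).

Local Notation Amat := (Amat phi P d alpha gamma).
Local Notation prodA := (prodA phi P d alpha gamma).
Local Notation Vinf := (Vinf phi P d alpha gamma beta).
Local Notation peps := (peps phi P d alpha gamma beta).

Definition worst_sqr (l : nat) (x : 'cV[R]_m) : R :=
  \big[Num.max/0]_(ps : l.-tuple {ffun S -> A}) norm2 (prodA ps *m x) ^+ 2.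

Definition Vpartial (x : 'cV[R]_m) (t : nat) :=
  \sum_(l < t.+1) (beta ^+ (2 * l))^-1 * worst_sqr l x.

Lemma VinfE x : Vinf x = limn (Vpartial x).
Proof. by []. Qed.

Lemma worst_sqr_ge0 l x : 0 <= worst_sqr l x.
Proof. exact: bigmax_ge_id. Qed.

Lemma worst_sqr0 l : worst_sqr l 0 = 0.
Proof.
apply/eqP; rewrite eq_le worst_sqr_ge0 andbT.
by apply: bigmax_le => // ps _; rewrite mulmx0 norm2_0 expr0n.
Qed.

Lemma worst_sqrD_young l x y t : 0 < t ->
  worst_sqr l (x + y) <= (1 + t) * worst_sqr l x + (1 + t^-1) * worst_sqr l y.
Proof.
move=> t0; have t1 : 0 <= 1 + t by lra.
have t2 : 0 <= 1 + t^-1 by rewrite addr_ge0 // invr_ge0 ltW.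
apply: bigmax_le => [|ps _]; first by rewrite addr_ge0 // mulr_ge0 // worst_sqr_ge0.
rewrite mulmxDr.
apply: (@le_trans _ _ ((norm2 (prodA ps *m x) + norm2 (prodA ps *m y)) ^+ 2)).
  by rewrite ler_pXn2r ?nnegrE ?addr_ge0 ?norm2_ge0 // ler_norm2D.
apply: le_trans (young_sqrD _ _ t0) _.
by apply: lerD; apply: ler_wpM2l => //; exact: le_bigmax.
Qed.

Lemma worst_sqr_Amat pi l x : worst_sqr l (Amat pi *m x) <= worst_sqr l.+1 x.
Proof.
apply: bigmax_le => [|ps _]; first exact: worst_sqr_ge0.
by rewrite mulmxA; exact: (le_bigmax _ _ (cons_tuple pi ps)).
Qed.

Lemma inv_beta_exp_ge0 l : 0 <= (beta ^+ (2 * l))^-1.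
Proof. by rewrite invr_ge0 mulnC exprM sqr_ge0. Qed.

Lemma nondecreasing_Vpartial x : nondecreasing_seq (Vpartial x).
Proof.
apply/nondecreasing_seqP => t; rewrite [leRHS]big_ord_recr lerDl /=.
by rewrite mulr_ge0 ?inv_beta_exp_ge0 ?worst_sqr_ge0.
Qed.

Variable C : R.
Hypothesis Vinf_sandwich : forall x : 'cV[R]_m,
  norm2 x ^+ 2 <= Vinf x <= C * norm2 x ^+ 2.

(* A divergent sequence has junk limit [0]; the lower bound then forces [x = 0]. *)
Lemma cvg_Vpartial x : cvgn (Vpartial x).
Proof.
have [->|x0] := eqVneq x 0.
  suff -> : Vpartial 0 = fun=> 0 by exact: is_cvg_cst.
  by apply: funext => t; apply: big1 => l _; rewrite worst_sqr0 mulr0.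
case: (pselect (cvgn (Vpartial x))) => // dvg.
have /andP[+ _] := Vinf_sandwich x; rewrite VinfE (dvgP dvg) => nx.
suff : x = 0 by move/eqP; rewrite (negPf x0).
by apply: norm2_eq0; apply/eqP; rewrite -sqrf_eq0 eq_le nx sqr_ge0.
Qed.

Lemma Vpartial_le_Vinf x t : Vpartial x t <= Vinf x.
Proof.
rewrite VinfE.
exact: nondecreasing_cvgn_le (nondecreasing_Vpartial x) (cvg_Vpartial (x := x)) t.
Qed.

Lemma Vinf_le x c : (forall t, Vpartial x t <= c) -> Vinf x <= c.
Proof.
by move=> h; rewrite VinfE; apply: limr_le (cvg_Vpartial (x := x)) _; apply: nearW.
Qed.

Lemma Vinf_ge0 x : 0 <= Vinf x.
Proof.
apply: le_trans (Vpartial_le_Vinf x 0); apply: sumr_ge0 => l _.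
by rewrite mulr_ge0 ?inv_beta_exp_ge0 ?worst_sqr_ge0.
Qed.

Lemma VinfD_young x y t : 0 < t ->
  Vinf (x + y) <= (1 + t) * Vinf x + (1 + t^-1) * Vinf y.
Proof.
move=> t0; have t1 : 0 <= 1 + t by lra.
have t2 : 0 <= 1 + t^-1 by rewrite addr_ge0 // invr_ge0 ltW.
apply: Vinf_le => n.
apply: (@le_trans _ _ ((1 + t) * Vpartial x n + (1 + t^-1) * Vpartial y n)).
  rewrite /Vpartial !mulr_sumr -big_split /=; apply: ler_sum => l _.
  rewrite mulrCA [X in _ <= _ + X]mulrCA -mulrDr.
  by apply: ler_wpM2l; [exact: inv_beta_exp_ge0 | exact: worst_sqrD_young].
by apply: lerD; apply: ler_wpM2l => //; exact: Vpartial_le_Vinf.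
Qed.

Lemma ler_pepsD x y : peps (x + y) <= peps x + peps y.
Proof. by apply: le_sqrtD_of_young; rewrite ?Vinf_ge0 // => t /VinfD_young. Qed.

Lemma peps_sandwich x : 0 <= C -> norm2 x <= peps x <= Num.sqrt C * norm2 x.
Proof.
move=> C0; have /andP[lo hi] := Vinf_sandwich x.
rewrite -[norm2 x]ger0_norm ?norm2_ge0 // -sqrtr_sqr -sqrtrM ?sqr_ge0 //.
by rewrite /peps !ler_sqrt ?lo ?hi // ?Vinf_ge0 // mulr_ge0 ?sqr_ge0.
Qed.

Lemma Vinf_Amat pi x : beta != 0 -> Vinf (Amat pi *m x) <= beta ^+ 2 * Vinf x.
Proof.
move=> beta0; apply: Vinf_le => t.
apply: le_trans (ler_wpM2l (sqr_ge0 beta) (Vpartial_le_Vinf x t.+1)).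
rewrite /Vpartial [X in _ <= _ * X]big_ord_recl mulrDr -[X in X <= _]add0r.
apply: lerD; first by rewrite mulr_ge0 ?sqr_ge0 ?mulr_ge0 ?inv_beta_exp_ge0 ?worst_sqr_ge0.
rewrite mulr_sumr; apply: ler_sum => l _; rewrite mulrA; change (bump 0 l) with l.+1.
have -> : beta ^+ 2 * (beta ^+ (2 * l.+1))^-1 = (beta ^+ (2 * l))^-1.
  by rewrite mulnS exprD invfM mulrA divff ?mul1r // expf_neq0.
by apply: ler_wpM2l; [exact: inv_beta_exp_ge0 | exact: worst_sqr_Amat].
Qed.

Lemma peps_Amat pi x : 0 < beta -> peps (Amat pi *m x) <= beta * peps x.
Proof.
move=> beta0; rewrite /peps.
have -> : beta * Num.sqrt (Vinf x) = Num.sqrt (beta ^+ 2 * Vinf x).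
  by rewrite sqrtrM ?sqr_ge0 // sqrtr_sqr ger0_norm // ltW.
by rewrite ler_sqrt ?Vinf_Amat ?gt_eqF // mulr_ge0 ?sqr_ge0 ?Vinf_ge0.
Qed.

End LyapunovNorm.

Section OneStep.
Variables (R : realType) (S A : finType) (m : nat).
Variables (phi : S -> A -> 'cV[R]_m) (P : S -> A -> S -> R) (r : S -> A -> S -> R).
Variables (d : S * A -> R) (alpha gamma : R).

Local Notation Phi := (Phi phi).
Local Notation Amat := (Amat phi P d alpha gamma).
Local Notation phimax := (phimax phi).
Local Notation phi_ i := (phi (sa_of i).1 (sa_of i).2).

Definition td_err (th : 'cV[R]_m) (s : S) (a : A) (s' : S) : R :=
  r s a s' + gamma * Vth phi th s' - dot (phi s a) th.

Lemma thetaS th0 w k :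
  let th := theta phi r alpha gamma th0 w k in
  theta phi r alpha gamma th0 w k.+1 =
  th + alpha *: (td_err th (w k).1 (w k).2 (w k.+1).1 *: phi (w k).1 (w k).2).
Proof. by []. Qed.

Lemma phimax_ge0 : 0 <= phimax.
Proof. exact: bigmax_ge_id. Qed.

Lemma norm2_phi_le s a : norm2 (phi s a) <= phimax.
Proof. exact: (bigmax_sup (s, a)). Qed.

Lemma ler_abs_dot_phi s a x : `|dot (phi s a) x| <= phimax * norm2 x.
Proof.
apply: le_trans (ler_abs_dot _ _) _.
by apply: ler_wpM2r; [exact: norm2_ge0 | exact: norm2_phi_le].
Qed.

Lemma Rmax_ge0 : 0 <= Rmax r.
Proof. exact: bigmax_ge_id. Qed.

Lemma ler_abs_r s a s' : `|r s a s'| <= Rmax r.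
Proof. exact: (bigmax_sup (s, a, s')). Qed.

Lemma Phi_mulmxE x i : (Phi *m x) i 0 = dot (phi_ i) x.
Proof. by rewrite !mxE; apply: eq_bigr => j _; rewrite !mxE. Qed.

Lemma ler_abs_dot_norminf s a x : `|dot (phi s a) x| <= norminf (Phi *m x).
Proof.
have := ler_abs_norminf (Phi *m x) (enum_rank (s, a)).
by rewrite Phi_mulmxE /sa_of enum_rankK.
Qed.

Lemma ler_abs_maxA (f : A -> R) c :
  0 <= c -> (forall a, `|f a| <= c) -> `|Defs.maxA f| <= c.
Proof.
move=> c0 hf; rewrite /Defs.maxA; case: pickP => [a0 _|_]; last by rewrite normr0.
have [lo hi] : (forall a, - c <= f a) /\ (forall a, f a <= c).
  by split=> a; have /andP[] : - c <= f a <= c by rewrite -ler_norml.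
rewrite ler_norml; apply/andP; split; last by apply: bigmax_le => // a _.
by apply: le_trans (lo a0) _; exact: bigmax_ge_id.
Qed.

Lemma ler_abs_dot_shift s a ths x :
  `|dot (phi s a) (ths + x)| <= norminf (Phi *m ths) + phimax * norm2 x.
Proof.
have -> : dot (phi s a) (ths + x) = dot (phi s a) ths + dot (phi s a) x.
  by rewrite /dot -big_split; apply: eq_bigr => i _; rewrite mxE mulrDr.
apply: le_trans (ler_normD _ _) _.
by apply: lerD; [exact: ler_abs_dot_norminf | exact: ler_abs_dot_phi].
Qed.

Lemma ler_abs_Vth ths x s :
  `|Vth phi (ths + x) s| <= norminf (Phi *m ths) + phimax * norm2 x.
Proof.
apply: ler_abs_maxA => [|a]; last exact: ler_abs_dot_shift.
by rewrite addr_ge0 ?norminf_ge0 // mulr_ge0 ?phimax_ge0 ?norm2_ge0.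
Qed.

Hypothesis gamma_ge0 : 0 <= gamma.

Lemma ler_abs_td_err ths x s a s' :
  `|td_err (ths + x) s a s'|
    <= Rmax r + (1 + gamma) * (norminf (Phi *m ths) + phimax * norm2 x).
Proof.
apply: le_trans (ler_normB _ _) _; apply: le_trans (lerD (ler_normD _ _) (lexx _)) _.
rewrite normrM (ger0_norm gamma_ge0) mulrDl mul1r addrA addrAC.
apply: lerD; last exact: ler_abs_dot_shift.
by apply: lerD; [exact: ler_abs_r | apply: ler_wpM2l => //; exact: ler_abs_Vth].
Qed.

Hypothesis d_ge0 : forall x, 0 <= d x.
Hypothesis d_sum : \sum_x d x = 1.

Lemma PhiTD_mulmx (y : 'cV[R]_(nSA S A)) :
  Phi^T *m Dm d *m y = \sum_i (d (sa_of i) * y i 0) *: phi_ i.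
Proof.
apply/matrixP => j k; rewrite (ord1 k) !mxE summxE; apply: eq_bigr => i _.
by rewrite mul_mx_diag !mxE -mulrA mulrC.
Qed.

Lemma ler_norm2_PhiTD (y : 'cV[R]_(nSA S A)) c : 0 <= c ->
  (forall i, `|y i 0| <= c) -> norm2 (Phi^T *m Dm d *m y) <= phimax * c.
Proof.
move=> c0 hy; rewrite PhiTD_mulmx; apply: le_trans (ler_norm2_sum _) _.
have d_sum' : \sum_i d (sa_of i) = 1 by rewrite -d_sum -big_enum_val.
rewrite -[phimax * c]mul1r -d_sum' mulr_suml.
apply: ler_sum => i _; rewrite norm2Z normrM (ger0_norm (d_ge0 _)) -mulrA.
by apply: ler_wpM2l => //; rewrite mulrC ler_pM ?norm2_ge0 ?norm2_phi_le.
Qed.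

Hypothesis P_ge0 : forall s a s', 0 <= P s a s'.
Hypothesis P_sum : forall s a, \sum_s' P s a s' = 1.

Lemma ler_abs_Pm_Pim pi (z : 'cV[R]_(nSA S A)) c :
  (forall j, `|z j 0| <= c) -> forall i, `|(Pm P *m (Pim R pi *m z)) i 0| <= c.
Proof.
move=> hz; apply: stochastic_mulmx_le => [i j|i|]; first by rewrite mxE.
  under eq_bigr do rewrite mxE.
  by rewrite -[RHS](P_sum (sa_of i).1 (sa_of i).2) -big_enum_val.
apply: stochastic_mulmx_le => // [j i|j]; first by rewrite mxE ler0n.
under eq_bigr do rewrite mxE.
rewrite -(big_enum_val (fun x => (x == (s_of j, pi (s_of j)))%:R)) /=.
by rewrite (bigD1 (s_of j, pi (s_of j))) //= eqxx big1 ?addr0 // => x /negbTE ->.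
Qed.

Lemma Amat_mulmx pi (x : 'cV[R]_m) : Amat pi *m x =
  x - alpha *: (Phi^T *m Dm d *m (Phi *m x - gamma *: (Pm P *m (Pim R pi *m (Phi *m x))))).
Proof.
rewrite /Amat mulmxDl mulmxBl mul1mx -!scalemxAl !mulmxA mulmxBr -!scalemxAr !mulmxA.
set u := _ *m Phi *m x; set v := _ *m Phi *m x.
by apply/matrixP => i j; rewrite !mxE; ring.
Qed.

Lemma ler_norm2_noise pi ths x s a s' : 0 <= alpha ->
  norm2 (x + alpha *: (td_err (ths + x) s a s' *: phi s a) - Amat pi *m x)
   <= alpha * phimax * (Rmax r + (1 + gamma) * norminf (Phi *m ths))
      + 2 * alpha * (1 + gamma) * phimax ^+ 2 * norm2 x.
Proof.
move=> alpha0.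
set y := Phi *m x - gamma *: (Pm P *m (Pim R pi *m (Phi *m x))).
set e := td_err (ths + x) s a s'.
have -> : x + alpha *: (e *: phi s a) - Amat pi *m x
          = alpha *: (e *: phi s a + Phi^T *m Dm d *m y).
  by rewrite Amat_mulmx opprB addrC addrA subrK addrC scalerDr.
have hy i : `|y i 0| <= (1 + gamma) * (phimax * norm2 x).
  have -> : y i 0 = (Phi *m x) i 0 - gamma * (Pm P *m (Pim R pi *m (Phi *m x))) i 0.
    by rewrite !mxE.
  apply: le_trans (ler_normB _ _) _.
  rewrite normrM (ger0_norm gamma_ge0) mulrDl mul1r; apply: lerD.
    by rewrite Phi_mulmxE ler_abs_dot_phi.
  apply: ler_wpM2l => //; apply: ler_abs_Pm_Pim => j.
  by rewrite Phi_mulmxE ler_abs_dot_phi.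
have phx0 : 0 <= phimax * norm2 x by rewrite mulr_ge0 ?phimax_ge0 ?norm2_ge0.
have hPhiTD := ler_norm2_PhiTD (mulr_ge0 (addr_ge0 ler01 gamma_ge0) phx0) hy.
have he := ler_abs_td_err ths x s a s'.
rewrite norm2Z (ger0_norm alpha0).
apply: le_trans (ler_wpM2l alpha0 (ler_norm2D _ _)) _.
rewrite norm2Z.
have hephi : `|e| * norm2 (phi s a) <=
    (Rmax r + (1 + gamma) * (norminf (Phi *m ths) + phimax * norm2 x)) * phimax.
  by apply: ler_pM; rewrite ?normr_ge0 ?norm2_ge0 ?norm2_phi_le.
have := mulr_ge0 alpha0 phimax_ge0; have := phimax_ge0; nra.
Qed.

End OneStep.

Section Trajectories.
Variables (R : realType) (T : finType).

Definition ffun_rcons k (w : {ffun 'I_k.+1 -> T}) (t : T) : {ffun 'I_k.+2 -> T} :=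
  [ffun i : 'I_k.+2 => if (i < k.+1)%N then w (inord i) else t].

Lemma big_ffun_rcons k (F : {ffun 'I_k.+2 -> T} -> R) :
  \sum_w F w = \sum_(w : {ffun 'I_k.+1 -> T}) \sum_t F (ffun_rcons w t).
Proof.
rewrite pair_big /= (reindex (fun wt => ffun_rcons wt.1 wt.2)) //.
exists (fun w : {ffun 'I_k.+2 -> T} =>
          ([ffun i : 'I_k.+1 => w (widen_ord (leqnSn _) i)], w ord_max)).
  case=> w t _ /=; congr pair; last by rewrite ffunE /= ltnn.
  apply/ffunP => i; rewrite !ffunE /= ltn_ord.
  by congr (w _); apply: val_inj; rewrite /= inordK.
move=> w _; apply/ffunP => i; rewrite !ffunE; case: ifP => [ik|].
  by congr (w _); apply: val_inj; rewrite /= inordK.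
move/negbT; rewrite -leqNgt => ik; congr (w _); apply: val_inj => /=.
by apply/eqP; rewrite eqn_leq ik -ltnS ltn_ord.
Qed.

Lemma big_ffun1 (F : {ffun 'I_1 -> T} -> R) : \sum_w F w = \sum_t F [ffun=> t].
Proof.
rewrite (reindex (fun t => [ffun=> t])) //.
exists (fun w : {ffun 'I_1 -> T} => w ord0) => [t _|w _]; first by rewrite ffunE.
by apply/ffunP => i; rewrite ffunE (ord1 i).
Qed.

End Trajectories.

Section PathProbability.
Variables (R : realType) (S A : finType).
Variables (P : S -> A -> S -> R) (b : S -> A -> R) (mu : S * A -> R).
Hypothesis P_ge0 : forall s a s', 0 <= P s a s'.
Hypothesis P_sum : forall s a, \sum_s' P s a s' = 1.
Hypothesis b_ge0 : forall s a, 0 <= b s a.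
Hypothesis b_sum : forall s, \sum_a b s a = 1.
Hypothesis mu_ge0 : forall x, 0 <= mu x.
Hypothesis mu_sum : \sum_x mu x = 1.

Local Notation pathprob := (pathprob P b mu).

Lemma pathprob_ge0 k (w : {ffun 'I_k.+1 -> S * A}) : 0 <= pathprob w.
Proof. by rewrite mulr_ge0 //; apply: prodr_ge0 => j _; rewrite mulr_ge0. Qed.

Lemma wnat_rcons k (w : {ffun 'I_k.+1 -> S * A}) t j : (j <= k)%N ->
  wnat (ffun_rcons w t) j = wnat w j.
Proof.
move=> jk; have jk2 : (j < k.+2)%N by rewrite ltnS leqW.
by rewrite /wnat ffunE inordK // ltnS jk.
Qed.

Lemma wnat_rcons_last k (w : {ffun 'I_k.+1 -> S * A}) t : wnat (ffun_rcons w t) k.+1 = t.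
Proof. by rewrite /wnat ffunE inordK // ltnn. Qed.

Lemma pathprob_rcons k (w : {ffun 'I_k.+1 -> S * A}) t :
  pathprob (ffun_rcons w t) = pathprob w * (P (wnat w k).1 (wnat w k).2 t.1 * b t.1 t.2).
Proof.
rewrite /pathprob big_ord_recr /= mulrA wnat_rcons_last !wnat_rcons //.
by congr (_ * _ * _); apply: eq_bigr => j _; rewrite !wnat_rcons // ltnW.
Qed.

Lemma sum_kernel s a : \sum_(t : S * A) P s a t.1 * b t.1 t.2 = 1.
Proof.
rewrite -(pair_big predT predT (fun s' a' => P s a s' * b s' a')) /= -(P_sum s a).
by apply: eq_bigr => s' _; rewrite -mulr_sumr b_sum mulr1.
Qed.

Lemma pathprob_sum k : \sum_(w : {ffun 'I_k.+1 -> S * A}) pathprob w = 1.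
Proof.
elim: k => [|k IH].
  rewrite big_ffun1 -mu_sum; apply: eq_bigr => t _.
  by rewrite /pathprob big_ord0 mulr1 /wnat ffunE.
rewrite big_ffun_rcons -IH; apply: eq_bigr => w _.
by under eq_bigr do rewrite pathprob_rcons; rewrite -mulr_sumr sum_kernel mulr1.
Qed.

Lemma Expect_le m (phi : S -> A -> 'cV[R]_m) r alpha gamma th0 k f B :
  (forall w, f (theta phi r alpha gamma th0 w k) <= B) ->
  Expect phi P r alpha gamma b mu th0 k f <= B.
Proof.
move=> hf; rewrite -[B]mul1r -(pathprob_sum k) mulr_suml.
by apply: ler_sum => w _; apply: ler_wpM2l; [exact: pathprob_ge0 | exact: hf].
Qed.

End PathProbability.

Lemma jsr_ge0 (R : realType) (S A : finType) m (phi : S -> A -> 'cV[R]_m) P d alpha gamma :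
  0 <= jsr phi P d alpha gamma.
Proof.
rewrite /jsr; set u := fun k => _.
case: (pselect (cvgn u)) => [cv|/dvgP ->] //.
by apply: limr_ge cv _; apply: nearW => k; exact: powR_ge0.
Qed.

Section PathwiseBound.
Variables (R : realType) (S A : finType) (m : nat).
Variables (phi : S -> A -> 'cV[R]_m) (P : S -> A -> S -> R) (r : S -> A -> S -> R).
Variables (d : S * A -> R) (alpha gamma beta C lam K : R) (th0 ths : 'cV[R]_m).
Hypothesis P_ge0 : forall s a s', 0 <= P s a s'.
Hypothesis P_sum : forall s a, \sum_s' P s a s' = 1.
Hypothesis d_ge0 : forall x, 0 <= d x.
Hypothesis d_sum : \sum_x d x = 1.
Hypotheses (alpha_ge0 : 0 <= alpha) (gamma_ge0 : 0 <= gamma).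
Hypotheses (beta_gt0 : 0 < beta) (C_ge0 : 0 <= C).
Hypothesis Vinf_sandwich : forall x : 'cV[R]_m,
  norm2 x ^+ 2 <= Vinf phi P d alpha gamma beta x <= C * norm2 x ^+ 2.
Hypothesis lam_ge : beta + 2 * alpha * Num.sqrt C * (1 + gamma) * phimax phi ^+ 2 <= lam.
Hypothesis K_ge :
  alpha * Num.sqrt C * phimax phi * (Rmax r + (1 + gamma) * norminf (Phi phi *m ths)) <= K.
Hypothesis lam_lt1 : lam < 1.

Local Notation peps := (peps phi P d alpha gamma beta).
Local Notation theta := (theta phi r alpha gamma th0).

Let lam_ge0 : 0 <= lam.
Proof.
apply: le_trans lam_ge; apply: addr_ge0; first exact: ltW.
by rewrite !mulr_ge0 ?ler0n ?sqrtr_ge0 ?sqr_ge0 ?addr_ge0 ?phimax_ge0.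
Qed.

Lemma peps_theta_step w k :
  peps (theta w k.+1 - ths) <= lam * peps (theta w k - ths) + K.
Proof.
set x := theta w k - ths; pose pi : {ffun S -> A} := [ffun=> (w k).2].
set s := (w k).1; set a := (w k).2; set s' := (w k.+1).1.
set noise := x + alpha *: (td_err phi r gamma (ths + x) s a s' *: phi s a)
             - Amat phi P d alpha gamma pi *m x.
have -> : theta w k.+1 - ths = Amat phi P d alpha gamma pi *m x + noise.
  have thk : theta w k = x + ths by rewrite /x subrK.
  by rewrite /noise [RHS]addrC subrK thetaS thk addrAC addrK [x + ths]addrC.
have /andP[px _] := peps_sandwich Vinf_sandwich x C_ge0.
have /andP[_ pn] := peps_sandwich Vinf_sandwich noise C_ge0.
have hA := peps_Amat Vinf_sandwich pi x beta_gt0.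
have hn := ler_norm2_noise phi r gamma_ge0 d_ge0 d_sum P_ge0 P_sum pi ths x s a s' alpha_ge0.
apply: le_trans (ler_pepsD Vinf_sandwich _ _) _.
rewrite -/noise in hn.
have p0 : 0 <= peps x := le_trans (norm2_ge0 x) px.
have sC := sqrtr_ge0 C.
have hn' := ler_wpM2l sC hn.
have hV : Num.sqrt C * (2 * alpha * (1 + gamma) * phimax phi ^+ 2 * norm2 x)
          <= Num.sqrt C * (2 * alpha * (1 + gamma) * phimax phi ^+ 2 * peps x).
  apply: (ler_wpM2l sC); apply: ler_wpM2l px.
  by rewrite !mulr_ge0 ?ler0n ?addr_ge0 ?phimax_ge0.
apply: le_trans (lerD hA (le_trans pn hn')) _; rewrite mulrDr.
apply: le_trans (lerD (lexx _) (lerD (lexx _) hV)) _.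
apply: le_trans (lerD (ler_wpM2r p0 lam_ge) K_ge).
by rewrite le_eqVlt; apply/orP; left; apply/eqP; ring.
Qed.

Lemma peps_theta_le w k : peps (theta w k - ths)
  <= lam ^+ k * peps (th0 - ths) + K / (1 - lam) * (1 - lam ^+ k).
Proof.
have lam_neq1 : lam != 1 by rewrite lt_eqF.
exact: (affine_recursion_le (u := fun k => peps (theta w k - ths)) lam_ge0 lam_neq1
          (peps_theta_step w) k).
Qed.

Lemma norm2_theta_le w k : norm2 (theta w k - ths)
  <= Num.sqrt C * lam ^+ k * norm2 (th0 - ths) + K / (1 - lam).
Proof.
have /andP[hx _] := peps_sandwich Vinf_sandwich (theta w k - ths) C_ge0.
have /andP[_ h0] := peps_sandwich Vinf_sandwich (th0 - ths) C_ge0.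
have lamk0 : 0 <= lam ^+ k by rewrite exprn_ge0 ?lam_ge0.
have lamk1 : lam ^+ k <= 1 by rewrite exprn_ile1 ?lam_ge0 ?ltW.
have K0 : 0 <= K.
  apply: le_trans K_ge.
  by rewrite !mulr_ge0 ?addr_ge0 ?mulr_ge0 ?sqrtr_ge0 ?phimax_ge0 ?Rmax_ge0 ?norminf_ge0 ?addr_ge0.
have KL0 : 0 <= K / (1 - lam) by rewrite divr_ge0 // subr_ge0 ltW.
apply: le_trans hx (le_trans (peps_theta_le w k) _).
rewrite [X in _ <= X + _]mulrAC [X in _ <= X + _]mulrC.
by apply: lerD; [exact: ler_wpM2l | rewrite ler_piMr // lerBlDr lerDl].
Qed.

End PathwiseBound.

Theorem theorem4 (R : realType) (S A : finType) (m : nat)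
  (P : S -> A -> S -> R) (r : S -> A -> S -> R) (gamma : R)
  (phi : S -> A -> 'cV[R]_m) (b : S -> A -> R) (mu : S * A -> R)
  (d : S * A -> R) (alpha : R) (th0 thstar : 'cV[R]_m) (eps C : R) :
  (* MDP *)
  (forall s a s', 0 <= P s a s') -> (forall s a, \sum_s' P s a s' = 1) ->
  0 < gamma < 1 ->
  (* features: Phi has full column rank *)
  \rank (Phi phi) = m ->
  (* behaviour policy, initial law of X_0, stationary distribution d > 0 *)
  (forall s a, 0 <= b s a) -> (forall s, \sum_a b s a = 1) ->
  (forall x, 0 <= mu x) -> \sum_x mu x = 1 ->
  (forall x, 0 < d x) -> \sum_x d x = 1 ->
  (forall s' a', \sum_(x : S * A) d x * (P x.1 x.2 s' * b s' a') = d (s', a')) ->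
  (* step size *)
  0 < alpha < 1 ->
  let rho := jsr phi P d alpha gamma in
  rho < 1 ->
  (* theta* is the projected Bellman fixed point *)
  gfun phi P r d gamma thstar = 0 ->
  0 < eps ->
  let beta := rho + eps in
  beta < 1 ->
  let p := peps phi P d alpha gamma beta in
  1 <= C ->
  (forall x : 'cV[R]_m,
      norm2 x ^+ 2 <= Vinf phi P d alpha gamma beta x <= C * norm2 x ^+ 2) ->
  let lam := beta + 4 * alpha * Num.sqrt C * (1 + gamma) * phimax phi ^+ 2 in
  lam < 1 ->
  let K := 2 * alpha * Num.sqrt C * phimax phi *
             (Rmax r + (1 + gamma) * norminf (Phi phi *m thstar)
                     + norminf (Bres phi P r gamma thstar)) in
  let E := Expect phi P r alpha gamma b mu th0 in
  (forall k : nat,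
     E k (fun th => p (th - thstar))
       <= lam ^+ k * p (th0 - thstar) + K / (1 - lam) * (1 - lam ^+ k)) /\
  (forall k : nat,
     E k (fun th => norm2 (th - thstar))
       <= Num.sqrt C * lam ^+ k * norm2 (th0 - thstar) + K / (1 - lam)) /\
  (limn_esup (fun k => (E k (fun th => norm2 (th - thstar)))%:E)
       <= (K / (1 - lam))%:E)%E /\
  (forall k : nat,
     E k (fun th => norm2 (Phi phi *m th - Phi phi *m thstar))
       <= opnorm (Phi phi) *
          (Num.sqrt C * lam ^+ k * norm2 (th0 - thstar) + K / (1 - lam))).
Proof.
move=> P_ge0 P_sum /andP[gamma_gt0 _] _ b_ge0 b_sum mu_ge0 mu_sum d_gt0 d_sum _.
move=> /andP[alpha_gt0 _] rho _ _ eps_gt0 beta _ p C_ge1 Vinf_sandwich lam lam_lt1 K E.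
have beta_gt0 : 0 < beta by rewrite ltr_wpDl ?jsr_ge0.
have aCphi0 : 0 <= alpha * Num.sqrt C * phimax phi.
  by rewrite !mulr_ge0 ?sqrtr_ge0 ?phimax_ge0 // ltW.
have gamma1 : 0 <= 1 + gamma by rewrite addr_ge0 // ltW.
have coef0 := mulr_ge0 (mulr_ge0 aCphi0 gamma1) (phimax_ge0 phi).
have lam_ge : beta + 2 * alpha * Num.sqrt C * (1 + gamma) * phimax phi ^+ 2 <= lam.
  by rewrite /lam; lra.
have K_ge : alpha * Num.sqrt C * phimax phi
            * (Rmax r + (1 + gamma) * norminf (Phi phi *m thstar)) <= K.
  have := mulr_ge0 aCphi0 (norminf_ge0 (Bres phi P r gamma thstar)).
  have := norminf_ge0 (Phi phi *m thstar).
  move/(mulr_ge0 gamma1)/(addr_ge0 (Rmax_ge0 r))/(mulr_ge0 aCphi0).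
  by rewrite /K; lra.
have hp := peps_theta_le th0 P_ge0 P_sum (fun x => ltW (d_gt0 x)) d_sum (ltW alpha_gt0)
  (ltW gamma_gt0) beta_gt0 (le_trans ler01 C_ge1) Vinf_sandwich lam_ge K_ge lam_lt1.
have hn := norm2_theta_le th0 P_ge0 P_sum (fun x => ltW (d_gt0 x)) d_sum (ltW alpha_gt0)
  (ltW gamma_gt0) beta_gt0 (le_trans ler01 C_ge1) Vinf_sandwich lam_ge K_ge lam_lt1.
have E_le := Expect_le P_ge0 P_sum b_ge0 b_sum mu_ge0 mu_sum.
split; first by move=> k; apply: E_le => w; exact: hp.
split; first by move=> k; apply: E_le => w; exact: hn.
split.
  apply: (limn_esup_le_geometric (c := Num.sqrt C * norm2 (th0 - thstar)) (lam := lam)).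
    by rewrite lam_lt1 andbT; lra.
  by move=> k; rewrite mulrAC; apply: E_le => w; exact: hn.
move=> k; apply: E_le => w; rewrite -mulmxBr.
exact: le_trans (ler_opnorm _ _) (ler_wpM2l (opnorm_ge0 _) (hn w k)).
Qed.
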